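(* Let $n\ge4$. (i) Every variety with two-headed directed Gumm terms $p,t_2,\dots,t_{n-2},q$ is $(2n-3)$-reversed-modular, hence $(2n-2)$-modular. In particular this applies to every variety which is $n$-directed with alvin heads. (ii) There is a locally finite variety which is $n$-directed with alvin heads (in particular has two-headed directed Gumm terms $p,t_2,\dots,t_{n-2},q$) but is not $(2n-3)$-modular.
   Context: Two-headed directed Gumm terms (for $n\ge4$): ternary terms $p,t_2,\dots,t_{n-2},q$ satisfying $t_h(x,y,x)=x$ for $2\le h\le n-2$; $p(x,z,z)=x$ and $p(x,x,z)=t_2(x,x,z)$; $t_h(x,z,z)=t_{h+1}(x,x,z)$ for $2\le h<n-2$; $t_{n-2}(x,z,z)=q(x,z,z)$ and $q(x,x,z)=z$. If in addition $p(x,y,x)=x$ and $q(x,y,x)=x$, the variety is called $n$-directed with alvin heads. Day terms: $4$-ary $u_0,\dots,u_m$ with $u_k(x,y,y,x)=x$ for all $k$, $u_0(x,y,z,w)=x$, $u_m(x,y,z,w)=w$, $u_k(x,x,w,w)=u_{k+1}(x,x,w,w)$ for even $k$, $u_k(x,y,y,w)=u_{k+1}(x,y,y,w)$ for odd $k$; reversed Day terms: even/odd exchanged in the last two. $m$-modular ($m$-reversed-modular): having Day (reversed Day) terms $u_0,\dots,u_m$. *)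

From mathcomp Require Import all_boot.
Set Implicit Arguments. Unset Strict Implicit. Unset Printing Implicit Defensive.

Record signature := Signature { op : Type; arity : op -> nat }.

Inductive term (S : signature) (X : Type) : Type :=
  | Var : X -> term S X
  | App : forall f : op S, ('I_(arity f) -> term S X) -> term S X.
Arguments Var {S X} _.
Arguments App {S X} f _.

Record algebra (S : signature) := Algebra {
  carrier :> Type;
  interp : forall f : op S, ('I_(arity f) -> carrier) -> carrier }.

Fixpoint eval (S : signature) (A : algebra S) (X : Type) (v : X -> A)
    (t : term S X) : A :=
  match t with
  | Var x => v x
  | App f args => @interp S A f (fun i => @eval S A X v (args i))
  end.

(* A variety of signature S, given (Birkhoff) by a set of defining
   identities between terms in the variables 0,1,2,... *)
Definition variety (S : signature) := term S nat -> term S nat -> Prop.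

Definition in_variety (S : signature) (V : variety S) (A : algebra S) : Prop :=
  forall s t, V s t -> forall v : nat -> A, @eval S A nat v s = @eval S A nat v t.

Definition top3 (S : signature) (A : algebra S) (t : term S 'I_3) (a b c : A) : A :=
  @eval S A _ (fun i : 'I_3 => nth a [:: a; b; c] i) t.
Definition top4 (S : signature) (A : algebra S) (t : term S 'I_4)
    (a b c d : A) : A :=
  @eval S A _ (fun i : 'I_4 => nth a [:: a; b; c; d] i) t.

(* p, t_2, ..., t_{n-2}, q ; the family t is indexed by nat, only the
   indices 2 <= h <= n-2 matter. *)
Definition tdg_identities (S : signature) (V : variety S) (n : nat)
    (p q : term S 'I_3) (t : nat -> term S 'I_3) : Prop :=
  forall A : algebra S, in_variety V A -> forall x y z : A,
    (forall h, 2 <= h <= n - 2 -> top3 (t h) x y x = x) /\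
    top3 p x z z = x /\
    top3 p x x z = top3 (t 2) x x z /\
    (forall h, 2 <= h < n - 2 -> top3 (t h) x z z = top3 (t h.+1) x x z) /\
    top3 (t (n - 2)) x z z = top3 q x z z /\
    top3 q x x z = z.

Definition has_two_headed_directed_Gumm (S : signature) (V : variety S) (n : nat) :=
  exists (p q : term S 'I_3) (t : nat -> term S 'I_3), tdg_identities V n p q t.

Definition n_directed_alvin_heads (S : signature) (V : variety S) (n : nat) :=
  exists (p q : term S 'I_3) (t : nat -> term S 'I_3),
    tdg_identities V n p q t /\
    forall A : algebra S, in_variety V A -> forall x y : A,
      top3 p x y x = x /\ top3 q x y x = x.

Definition day_terms (S : signature) (V : variety S) (m : nat)
    (u : nat -> term S 'I_4) : Prop :=
  forall A : algebra S, in_variety V A -> forall x y z w : A,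
    (forall k, k <= m -> top4 (u k) x y y x = x) /\
    top4 (u 0) x y z w = x /\
    top4 (u m) x y z w = w /\
    (forall k, k < m -> ~~ odd k -> top4 (u k) x x w w = top4 (u k.+1) x x w w) /\
    (forall k, k < m -> odd k -> top4 (u k) x y y w = top4 (u k.+1) x y y w).

Definition reversed_day_terms (S : signature) (V : variety S) (m : nat)
    (u : nat -> term S 'I_4) : Prop :=
  forall A : algebra S, in_variety V A -> forall x y z w : A,
    (forall k, k <= m -> top4 (u k) x y y x = x) /\
    top4 (u 0) x y z w = x /\
    top4 (u m) x y z w = w /\
    (forall k, k < m -> odd k -> top4 (u k) x x w w = top4 (u k.+1) x x w w) /\
    (forall k, k < m -> ~~ odd k -> top4 (u k) x y y w = top4 (u k.+1) x y y w).

Definition m_modular (S : signature) (V : variety S) (m : nat) :=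
  exists u : nat -> term S 'I_4, day_terms V m u.

Definition m_reversed_modular (S : signature) (V : variety S) (m : nat) :=
  exists u : nat -> term S 'I_4, reversed_day_terms V m u.

Definition locally_finite (S : signature) (V : variety S) : Prop :=
  forall A : algebra S, in_variety V A ->
    forall (k : nat) (g : 'I_k -> A),
      (forall a : A, exists t : term S 'I_k, @eval S A _ g t = a) ->
      exists (N : nat) (e : 'I_N -> A), forall a : A, exists i, e i = a.

From mathcomp Require Import all_boot zify.
From Stdlib Require Import FunctionalExtensionality Classical_Prop ClassicalEpsilon.
Set Implicit Arguments. Unset Strict Implicit. Unset Printing Implicit Defensive.

(* (i) Two-headed directed Gumm terms p, t_2, ..., t_(n-2), q yield reversed
   Day terms u_0, ..., u_(2n-3) by substituting variables ([day_chain]):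
   x, p(x,y,z), t_2(x,y,w), t_2(x,z,w), ..., t_(n-2)(x,z,w), q(y,z,w), w.
   Prepending the projection x to reversed Day terms gives Day terms one
   longer ([reversed_modular_modular]).

   (ii) For N = n-1 >= 3 we build a finite algebra [Stair] in the ternary
   signature with one basic operation per natural number: the subalgebra,
   carried by the "staircase" [stair N], of the product of two algebras on
   {0, ..., N} whose basic operations p, t_h, q satisfy the identities
   [dgumm_ops].  The variety it generates is locally finite (as is every
   variety generated by a finite algebra), is n-directed with alvin heads
   (identities of a generating algebra hold in its variety), and has no Day
   terms u_0, ..., u_(2n-3): along such a chain evaluated at four suitable
   staircase points the first coordinate climbs at most one step every two
   terms, so it cannot reach N. *)

Definition x3 : 'I_3 := @Ordinal 3 0 isT.
Definition y3 : 'I_3 := @Ordinal 3 1 isT.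
Definition z3 : 'I_3 := @Ordinal 3 2 isT.
Definition x4 : 'I_4 := @Ordinal 4 0 isT.
Definition y4 : 'I_4 := @Ordinal 4 1 isT.
Definition z4 : 'I_4 := @Ordinal 4 2 isT.
Definition w4 : 'I_4 := @Ordinal 4 3 isT.

Definition pick3 (T : Type) (x y z : T) (i : 'I_3) : T := nth x [:: x; y; z] i.
Definition pick4 (T : Type) (x y z w : T) (i : 'I_4) : T := nth x [:: x; y; z; w] i.

Section TermOperations.
Variable S : signature.

Fixpoint rename (X Y : Type) (f : X -> Y) (t : term S X) : term S Y :=
  match t with
  | Var x => Var (f x)
  | App g args => App g (fun i => rename f (args i))
  end.

Lemma eval_rename (A : algebra S) X Y (f : X -> Y) (v : Y -> A) (t : term S X) :
  eval v (rename f t) = eval (fun x => v (f x)) t.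
Proof.
elim: t => [x|g args IH] //=; congr (interp _).
by apply: functional_extensionality => i; exact: IH.
Qed.

Lemma eval_ext (A : algebra S) X (v v' : X -> A) (t : term S X) :
  (forall x, v x = v' x) -> eval v t = eval v' t.
Proof. by move=> h; rewrite (functional_extensionality _ _ h). Qed.

Definition is_hom (A B : algebra S) (h : A -> B) :=
  forall f args, h (@interp S A f args) = @interp S B f (fun i => h (args i)).

Lemma eval_hom (A B : algebra S) (h : A -> B) : is_hom h ->
  forall X (v : X -> A) (t : term S X), h (eval v t) = eval (fun x => h (v x)) t.
Proof.
move=> hom X v; elim=> [x|g args IH] //=; rewrite hom; congr (interp _).
by apply: functional_extensionality => i; exact: IH.
Qed.

Lemma top4_hom (A B : algebra S) (h : A -> B) : is_hom h ->
  forall (t : term S 'I_4) (a b c d : A), h (top4 t a b c d) = top4 t (h a) (h b) (h c) (h d).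
Proof.
move=> hom t a b c d; rewrite /top4 eval_hom //; apply: eval_ext.
by case=> [[|[|[|[|i]]]] Hi].
Qed.

Definition generated_variety (A : algebra S) : variety S :=
  fun s t => forall v : nat -> A, eval v s = eval v t.

Lemma generated_variety_in (A : algebra S) : in_variety (generated_variety A) A.
Proof. by move=> s t h v; exact: h. Qed.

Lemma generated_identity (A : algebra S) (k : nat) (s t : term S 'I_k) :
  (forall w : 'I_k -> A, eval w s = eval w t) ->
  forall B : algebra S, in_variety (generated_variety A) B ->
  forall g : 'I_k -> B, eval g s = eval g t.
Proof.
move=> hA B HB g.
have Vst : generated_variety A (rename (@nat_of_ord k) s) (rename (@nat_of_ord k) t).
  by move=> v; rewrite !eval_rename hA.
pose v (j : nat) : B := if insub j is Some i then g i else eval g s.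
have := HB _ _ Vst v; rewrite !eval_rename.
have gv (u : term S 'I_k) : eval (fun i : 'I_k => v i) u = eval g u.
  by apply: eval_ext => i; rewrite /v valK.
by rewrite !gv.
Qed.

Lemma generated_identity3 (A : algebra S) (s t : term S 'I_3) :
  (forall a b c : A, top3 s a b c = top3 t a b c) ->
  forall B : algebra S, in_variety (generated_variety A) B ->
  forall x y z : B, top3 s x y z = top3 t x y z.
Proof.
move=> hA B HB x y z; apply: generated_identity HB _ => w.
have -> : w = fun i => nth (w x3) [:: w x3; w y3; w z3] i.
  by apply: functional_extensionality => -[[|[|[|i]]] Hi] //=; congr w; exact: ord_inj.
exact: hA.
Qed.

(* The variety generated by a finite algebra is locally finite: an element of
   a [k]-generated member is determined by the [k]-ary term operation of the
   finite algebra induced by any term representing it. *)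
Lemma generated_locally_finite (T : finType) (opT : forall f : op S, ('I_(arity f) -> T) -> T) :
  locally_finite (generated_variety (Algebra opT)).
Proof.
move=> B HB k g gen.
have [[b0 _]|noB] := classic (exists b : B, True); last first.
  exists 0; unshelve eexists; first by case=> i; rewrite ltn0.
  by move=> a; case: noB; exists a.
have [t0 _] := gen b0.
pose code (t : term S 'I_k) : {ffun {ffun 'I_k -> T} -> T} :=
  [ffun w : {ffun 'I_k -> T} => eval (A := Algebra opT) (fun i => w i) t].
pose pick phi := epsilon (inhabits t0) (fun t => code t = phi).
exists #|{ffun {ffun 'I_k -> T} -> T}|, (fun i => eval g (pick (enum_val i))) => a.
have [t <-] := gen a; exists (enum_rank (code t)); rewrite enum_rankK.
have same : code (pick (code t)) = code t.
  exact: (epsilon_spec (inhabits t0) (fun t' => code t' = code t) (ex_intro _ t erefl)).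
move: (pick _) same => t' same; apply: (fun hA => generated_identity hA HB g) => w.
have code_at (u : term S 'I_k) : code u [ffun i => w i] = eval w u.
  by rewrite ffunE; apply: (@eval_ext (Algebra opT)) => i; rewrite ffunE.
by rewrite -!code_at same.
Qed.

End TermOperations.

Definition subst3 (S : signature) (t : term S 'I_3) (a b c : 'I_4) : term S 'I_4 :=
  rename (fun i : 'I_3 => nth a [:: a; b; c] i) t.

Lemma top4_subst3 (S : signature) (A : algebra S) (t : term S 'I_3) (a b c : 'I_4)
    (x y z w : A) :
  top4 (subst3 t a b c) x y z w =
  top3 t (pick4 x y z w a) (pick4 x y z w b) (pick4 x y z w c).
Proof. by rewrite /top4 /top3 eval_rename; apply: eval_ext => -[[|[|[|i]]] Hi]. Qed.

Section DayTermsFromGumm.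
Variables (S : signature) (n : nat) (p q : term S 'I_3) (t : nat -> term S 'I_3).
Hypothesis n_ge4 : 4 <= n.

(* The reversed Day chain of Theorem 6.8(i), with [m = 2n-3]:
   u_0 = x, u_1 = p(x,y,z), u_{2h-2} = t_h(x,y,w), u_{2h-1} = t_h(x,z,w)
   for 2 <= h <= n-2, u_{2n-4} = q(y,z,w), u_{2n-3} = w. *)
Definition day_chain (k : nat) : term S 'I_4 :=
  if k == 0 then Var x4
  else if k == 1 then subst3 p x4 y4 z4
  else if k < 2 * n - 4 then
    (if odd k then subst3 (t (k.+1 %/ 2)) x4 z4 w4 else subst3 (t (k %/ 2).+1) x4 y4 w4)
  else if k == 2 * n - 4 then subst3 q y4 z4 w4 else Var w4.

Lemma day_chain_q : day_chain (2 * n - 4) = subst3 q y4 z4 w4.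
Proof. by rewrite /day_chain; do ![case: ifP => ? //]; exfalso; lia. Qed.

Lemma day_chain_last : day_chain (2 * n - 3) = Var w4.
Proof. by rewrite /day_chain; do ![case: ifP => ? //]; exfalso; lia. Qed.

Lemma day_chain_even h : 2 <= h <= n - 2 ->
  day_chain (2 * h - 2) = subst3 (t h) x4 y4 w4.
Proof.
move=> hh; rewrite /day_chain; do ![case: ifP => ?]; try (exfalso; lia).
by congr (subst3 (t _)); lia.
Qed.

Lemma day_chain_odd h : 2 <= h <= n - 2 ->
  day_chain (2 * h - 1) = subst3 (t h) x4 z4 w4.
Proof.
move=> hh; rewrite /day_chain; do ![case: ifP => ?]; try (exfalso; lia).
by congr (subst3 (t _)); lia.
Qed.

Lemma day_index_cases k : k <= 2 * n - 3 ->
  [\/ k = 0, k = 1, k = 2 * n - 4 | k = 2 * n - 3] \/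
  exists2 h, 2 <= h <= n - 2 & (k = 2 * h - 2 \/ k = 2 * h - 1).
Proof.
move=> hk.
have [->|k0] := eqVneq k 0; first by left; apply: Or41.
have [->|k1] := eqVneq k 1; first by left; apply: Or42.
have [->|kq] := eqVneq k (2 * n - 4); first by left; apply: Or43.
have [->|kw] := eqVneq k (2 * n - 3); first by left; apply: Or44.
right; exists (k.+2 %/ 2); first lia.
by case: (boolP (odd k)) => ok; [right|left]; lia.
Qed.

Lemma gumm_reversed_day (V : variety S) :
  tdg_identities V n p q t -> reversed_day_terms V (2 * n - 3) day_chain.
Proof.
move=> T A HA x y z w.
have t_xyx (a b : A) h : 2 <= h <= n - 2 -> top3 (t h) a b a = a := (T A HA a b a).1 h.
have p_xzz (a b : A) : top3 p a b b = a := (T A HA a a b).2.1.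
have p_xxz (a b : A) : top3 p a a b = top3 (t 2) a a b := (T A HA a a b).2.2.1.
have t_chain (a b : A) h : 2 <= h < n - 2 -> top3 (t h) a b b = top3 (t h.+1) a a b :=
  (T A HA a a b).2.2.2.1 h.
have t_q (a b : A) : top3 (t (n - 2)) a b b = top3 q a b b := (T A HA a a b).2.2.2.2.1.
have q_xxz (a b : A) : top3 q a a b = b := (T A HA a a b).2.2.2.2.2.
have first_h : 2 <= 2 <= n - 2 by lia.
split.
  move=> k /day_index_cases[[->|->|->|->]|[h hh [->|->]]].
  - by [].
  - by rewrite /= top4_subst3 /= p_xzz.
  - by rewrite day_chain_q top4_subst3 /= q_xxz.
  - by rewrite day_chain_last.
  - by rewrite day_chain_even // top4_subst3 /= t_xyx.
  - by rewrite day_chain_odd // top4_subst3 /= t_xyx.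
split; first by [].
split; first by rewrite day_chain_last.
split.
  move=> k hk ok; case/day_index_cases: (ltnW hk) => [[e|e|e|e]|[h hh [e|e]]];
    subst k; try (exfalso; lia).
  - by rewrite (day_chain_even first_h) /= !top4_subst3 /= p_xxz.
  - have [lt|ge] := ltnP h (n - 2).
      rewrite (_ : (2 * h - 1).+1 = 2 * h.+1 - 2); last lia.
      rewrite day_chain_odd // day_chain_even; last lia.
      by rewrite !top4_subst3 /= t_chain //; lia.
    have -> : h = n - 2 by lia.
    rewrite (_ : (2 * (n - 2) - 1).+1 = 2 * n - 4); last lia.
    by rewrite day_chain_odd ?day_chain_q ?top4_subst3 /= ?t_q //; lia.
move=> k hk ev; case/day_index_cases: (ltnW hk) => [[e|e|e|e]|[h hh [e|e]]];
  subst k; try (exfalso; lia).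
- by rewrite /= top4_subst3 /= p_xzz.
- rewrite (_ : (2 * n - 4).+1 = 2 * n - 3); last lia.
  by rewrite day_chain_q day_chain_last top4_subst3 /= q_xxz.
- rewrite (_ : (2 * h - 2).+1 = 2 * h - 1); last lia.
  by rewrite day_chain_even ?day_chain_odd ?top4_subst3.
Qed.

End DayTermsFromGumm.

Lemma reversed_modular_modular (S : signature) (V : variety S) (m : nat) :
  m_reversed_modular V m -> m_modular V m.+1.
Proof.
case=> u U; exists (fun k => if k == 0 then Var x4 else u k.-1) => A HA x y z w.
have [R1 [R2 [R3 [_ _]]]] := U A HA x y z w.
split; first by case=> [|k] hk //=; apply: R1.
split; first by [].
split; first by [].
split.
  case=> [|k] hk /= ev; first by case: (U A HA x x w w) => _ [->].
  by case: (U A HA x x w w) => _ [_ [_ [R4 _]]]; apply: R4 => //; rewrite -[odd k]negbK.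
case=> [|k] //= hk od.
by case: (U A HA x y y w) => _ [_ [_ [_ R5]]]; apply: R5.
Qed.

Lemma gumm_modular (S : signature) (V : variety S) (n : nat) : 4 <= n ->
  has_two_headed_directed_Gumm V n ->
  m_reversed_modular V (2 * n - 3) /\ m_modular V (2 * n - 2).
Proof.
move=> n_ge4 [p [q [t T]]].
have rev : m_reversed_modular V (2 * n - 3).
  by exists (day_chain n p q t); exact: gumm_reversed_day.
split=> //; rewrite (_ : 2 * n - 2 = (2 * n - 3).+1); last lia.
exact: reversed_modular_modular.
Qed.

Lemma alvin_heads_gumm (S : signature) (V : variety S) (n : nat) :
  n_directed_alvin_heads V n -> has_two_headed_directed_Gumm V n.
Proof. by case=> p [q [t [T _]]]; exists p, q, t. Qed.

Definition median (a b c : nat) := maxn (minn a b) (minn (maxn a b) c).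

Lemma median_mono a b c a' b' c' :
  a <= a' -> b <= b' -> c <= c' -> median a b c <= median a' b' c'.
Proof. rewrite /median; lia. Qed.

Lemma median_succ a b c : median a.+1 b.+1 c.+1 = (median a b c).+1.
Proof. rewrite /median; lia. Qed.

Lemma median_between12 a b c : minn a b <= median a b c <= maxn a b.
Proof. rewrite /median; lia. Qed.

Lemma median_between13 a b c : minn a c <= median a b c <= maxn a c.
Proof. rewrite /median; lia. Qed.

Lemma median_first a b c : (b <= a <= c) || (c <= a <= b) -> median a b c = a.
Proof. rewrite /median; lia. Qed.

Lemma median_window c1 c3 u v t : c1 <= u <= c1.+1 -> c3 <= v <= c3.+1 ->
  median c1 c3 t <= median u v t <= (median c1 c3 t).+1.
Proof.
move=> /andP[h1 h2] /andP[h3 h4]; apply/andP; split; first exact: median_mono.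
by rewrite -median_succ; apply: median_mono.
Qed.

Lemma median_window_succ c1 c3 u v t : c1 <= u <= c1.+1 -> c3 <= v <= c3.+1 ->
  median c1 c3 t.+1 <= median u v t.+1 <= (median c1 c3 t).+1.
Proof.
move=> /andP[h1 h2] /andP[h3 h4]; apply/andP; split; first exact: median_mono.
by rewrite -median_succ; apply: median_mono.
Qed.

(* The two coordinate algebras of the counterexample live on {0, ..., N} and
   have basic operations [p] (index 1), [t_h] (index 2 <= h < N) and [q]
   (index N), built from walks: [walk j x z] is stage [j] of a monotone walk
   from [x] towards [z] (for [j] from 1 to N-1), and [t_h(x,y,z)] is [y]
   clamped between stages [h-1] and [h] of the walk.  The family of basic
   operations satisfying the identities of Theorem 6.8 (with [n = N+1]): *)
Definition dgumm_ops (T : Type) (D : T -> Prop) (F : nat -> T -> T -> T -> T) (N : nat) :=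
  forall x y z, D x -> D y -> D z ->
    (forall f, F f x y x = x) /\
    F 1 x z z = x /\ F 1 x x z = F 2 x x z /\
    (forall h, 2 <= h -> h < N.-1 -> F h x z z = F h.+1 x x z) /\
    F N.-1 x z z = F N x z z /\ F N x x z = z.

(* First coordinate: walks between the inner points [clamp N x] in [1, N-1]. *)
Definition clamp (N x : nat) := minn (maxn x 1) N.-1.
Definition walk_fst (N j x z : nat) :=
  median (clamp N x) (clamp N z) (if x <= z then j else N - j).
Definition p_fst (N x y z : nat) := if (x == z) || (y == z) then x else clamp N x.
Definition q_fst (N x y z : nat) := if x == z then x else if x == y then z else clamp N z.
Definition t_fst (N h x y z : nat) :=
  if x == z then x else median (walk_fst N h.-1 x z) y (walk_fst N h x z).
Definition ops_fst (N f : nat) : nat -> nat -> nat -> nat :=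
  if f <= 1 then p_fst N else if f < N then t_fst N f else q_fst N.

Lemma clamp_window N c a : 1 <= N -> c < N -> c <= a <= c.+1 -> c <= clamp N a <= c.+1.
Proof. rewrite /clamp; lia. Qed.

Lemma walk_fst_le N j x z : 1 <= N -> walk_fst N j x z <= N.-1.
Proof. move=> hN; rewrite /walk_fst /median /clamp; lia. Qed.

Lemma walk_fst_window N j x z c : 1 <= N -> c < N -> c <= x <= c.+1 -> c <= z <= c.+1 ->
  c <= walk_fst N j x z <= c.+1.
Proof.
move=> hN hc wx wz; have := clamp_window hN hc wx; have := clamp_window hN hc wz.
by rewrite /walk_fst; case/andP: (median_between12 (clamp N x) (clamp N z) (if x <= z then j else N - j)); lia.
Qed.

Lemma walk_fst_inc N j j' x z : 2 <= N -> x < z -> z <= N -> j <= j' ->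
  [&& x <= walk_fst N j x z, walk_fst N j x z <= walk_fst N j' x z & walk_fst N j' x z <= z].
Proof.
move=> hN xz zN jj; rewrite /walk_fst (ltnW xz).
have := median_between12 (clamp N x) (clamp N z) j.
have := median_between12 (clamp N x) (clamp N z) j'.
have : median (clamp N x) (clamp N z) j <= median (clamp N x) (clamp N z) j' by apply: median_mono.
rewrite /clamp; lia.
Qed.

Lemma walk_fst_dec N j j' x z : 2 <= N -> z < x -> x <= N -> j <= j' -> j' <= N ->
  [&& z <= walk_fst N j' x z, walk_fst N j' x z <= walk_fst N j x z & walk_fst N j x z <= x].
Proof.
move=> hN zx xN jj jN; rewrite /walk_fst (_ : (x <= z) = false); last lia.
have := median_between12 (clamp N x) (clamp N z) (N - j).
have := median_between12 (clamp N x) (clamp N z) (N - j').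
have : median (clamp N x) (clamp N z) (N - j') <= median (clamp N x) (clamp N z) (N - j).
  by apply: median_mono => //; lia.
rewrite /clamp; lia.
Qed.

Lemma walk_fst_1 N x z : 3 <= N -> x <= N -> z <= N -> x != z -> walk_fst N 1 x z = clamp N x.
Proof. move=> hN xN zN nxz; rewrite /walk_fst /median /clamp; case: ifP => ?; lia. Qed.

Lemma walk_fst_last N x z : 3 <= N -> x <= N -> z <= N -> x != z ->
  walk_fst N N.-1 x z = clamp N z.
Proof. move=> hN xN zN nxz; rewrite /walk_fst /median /clamp; case: ifP => ?; lia. Qed.

Lemma t_fst_xxz N h x z : 3 <= N -> 2 <= h <= N.-1 -> x <= N -> z <= N -> x != z ->
  t_fst N h x x z = walk_fst N h.-1 x z.
Proof.
move=> hN hh xN zN nxz; rewrite /t_fst (negbTE nxz); apply: median_first.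
have [xz|zx] := ltnP x z.
  by have := @walk_fst_inc N h.-1 h x z (ltnW hN) xz zN (leq_pred h); lia.
have zx' : z < x by rewrite ltn_neqAle eq_sym nxz zx.
have hhN : h <= N by lia.
by have := @walk_fst_dec N h.-1 h x z (ltnW hN) zx' xN (leq_pred h) hhN; lia.
Qed.

Lemma t_fst_xzz N h x z : 3 <= N -> 2 <= h <= N.-1 -> x <= N -> z <= N -> x != z ->
  t_fst N h x z z = walk_fst N h x z.
Proof.
move=> hN hh xN zN nxz; rewrite /t_fst (negbTE nxz) /median.
have [xz|zx] := ltnP x z.
  by have := @walk_fst_inc N h.-1 h x z (ltnW hN) xz zN (leq_pred h); lia.
have zx' : z < x by rewrite ltn_neqAle eq_sym nxz zx.
have hhN : h <= N by lia.
by have := @walk_fst_dec N h.-1 h x z (ltnW hN) zx' xN (leq_pred h) hhN; lia.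
Qed.

Lemma ops_fst_t N h : 2 <= h -> h < N -> ops_fst N h = t_fst N h.
Proof. by move=> h2 hN; rewrite /ops_fst hN ifN //; lia. Qed.

Lemma ops_fst_N N : 2 <= N -> ops_fst N N = q_fst N.
Proof. by move=> h; rewrite /ops_fst ltnn ifN //; lia. Qed.

Lemma ops_fst_ids N : 3 <= N -> dgumm_ops (fun x => x <= N) (ops_fst N) N.
Proof.
move=> hN x y z xN yN zN.
rewrite (_ : ops_fst N 1 = p_fst N) // ops_fst_N ?(ltnW hN) //.
rewrite (ops_fst_t (_ : 2 <= 2) hN) ?(ops_fst_t (_ : 2 <= N.-1)) //; try lia.
split.
  move=> f; rewrite /ops_fst; case: ifP => _; first by rewrite /p_fst eqxx.
  by case: ifP => _; [rewrite /t_fst eqxx|rewrite /q_fst eqxx].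
split; first by rewrite /p_fst eqxx orbT.
have [<-|nxz] := eqVneq x z.
  split; first by rewrite /p_fst /t_fst eqxx.
  split; last by rewrite /t_fst /q_fst eqxx.
  by move=> h h2 hN1; rewrite !ops_fst_t /t_fst ?eqxx //; lia.
have two : 2 <= 2 <= N.-1 by lia.
have hlast : 2 <= N.-1 <= N.-1 by lia.
split; first by rewrite t_fst_xxz // walk_fst_1 // /p_fst (negbTE nxz).
split.
  move=> h h2 hN1; rewrite !ops_fst_t; try lia.
  by rewrite t_fst_xzz ?t_fst_xxz //; lia.
split; first by rewrite t_fst_xzz // walk_fst_last // /q_fst (negbTE nxz).
by rewrite /q_fst; case: eqP => [->|]; rewrite ?eqxx.
Qed.

(* Second coordinate: the element [N] is absorbing for the walks, which run
   inside {0, ..., N-1} and start at [x] itself ([skip1] merges stages 0 and 1);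
   when the middle argument of [t_h] is [N], a shifted walk is used. *)
Definition skip1 (j : nat) := if j == 1 then 0 else j.
Definition walk_snd (N j x z : nat) :=
  if (x == N) || (z == N) then N
  else median x z (if x < z then skip1 j else N.-1 - skip1 j).
Definition walk_snd_top (N h x z : nat) := median x z (if x < z then h.-1 else N - h).
Definition p_snd (N x y z : nat) := if (x == z) || (y == z) then x else if z == N then N else x.
Definition q_snd (N x y z : nat) :=
  if x == z then x else if y == x then z else if x == N then N else z.
Definition t_snd (N h x y z : nat) :=
  if x == z then x else if (x == N) || (z == N) then N
  else if y == N then walk_snd_top N h x z
  else median (walk_snd N h.-1 x z) y (walk_snd N h x z).
Definition ops_snd (N f : nat) : nat -> nat -> nat -> nat :=
  if f <= 1 then p_snd N else if f < N then t_snd N f else q_snd N.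

Lemma walk_snd_between N j x z : x < N -> z < N -> minn x z <= walk_snd N j x z <= maxn x z.
Proof.
move=> hx hz; rewrite /walk_snd (ltn_eqF hx) (ltn_eqF hz) /=.
by case/andP: (median_between12 x z (if x < z then skip1 j else N.-1 - skip1 j)); lia.
Qed.

Lemma walk_snd_top_between N h x z : minn x z <= walk_snd_top N h x z <= maxn x z.
Proof. exact: median_between12. Qed.

Lemma skip1_mono i j : i <= j -> skip1 i <= skip1 j.
Proof. rewrite /skip1; do 2 case: eqP => ?; lia. Qed.

Lemma walk_snd_1 N x z : 3 <= N -> x <= N -> z <= N ->
  walk_snd N 1 x z = if (x == N) || (z == N) then N else x.
Proof.
move=> hN xN zN; rewrite /walk_snd /skip1 /=.
by case: ifP => // /norP[nx nz]; rewrite /median; case: ifP => ?; lia.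
Qed.

Lemma walk_snd_last N x z : 3 <= N -> x <= N -> z <= N ->
  walk_snd N N.-1 x z = if (x == N) || (z == N) then N else z.
Proof.
move=> hN xN zN; rewrite /walk_snd /skip1 (_ : (N.-1 == 1) = false); last lia.
by case: ifP => // /norP[nx nz]; rewrite /median; case: ifP => ?; lia.
Qed.

Lemma t_snd_xxz N h x z : 3 <= N -> 2 <= h <= N.-1 -> x <= N -> z <= N -> x != z ->
  t_snd N h x x z = walk_snd N h.-1 x z.
Proof.
move=> hN hh xN zN nxz; rewrite /t_snd /walk_snd (negbTE nxz).
case: ifP => // /norP[nx nz]; rewrite (negbTE nx) (negbTE nz) /=.
have := @skip1_mono h.-1 h (leq_pred h).
have : skip1 h <= N.-1 by rewrite /skip1; case: eqP => ?; lia.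
by rewrite /median; case: ifP => xz; lia.
Qed.

Lemma t_snd_xzz N h x z : 3 <= N -> 2 <= h <= N.-1 -> x <= N -> z <= N -> x != z ->
  t_snd N h x z z = walk_snd N h x z.
Proof.
move=> hN hh xN zN nxz; rewrite /t_snd /walk_snd (negbTE nxz).
case: ifP => // /norP[nx nz]; rewrite (negbTE nx) (negbTE nz) /=.
have := @skip1_mono h.-1 h (leq_pred h).
have : skip1 h <= N.-1 by rewrite /skip1; case: eqP => ?; lia.
by rewrite /median; case: ifP => xz; lia.
Qed.

Lemma ops_snd_t N h : 2 <= h -> h < N -> ops_snd N h = t_snd N h.
Proof. by move=> h2 hN; rewrite /ops_snd hN ifN //; lia. Qed.

Lemma ops_snd_N N : 2 <= N -> ops_snd N N = q_snd N.
Proof. by move=> h; rewrite /ops_snd ltnn ifN //; lia. Qed.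

Lemma ops_snd_ids N : 3 <= N -> dgumm_ops (fun x => x <= N) (ops_snd N) N.
Proof.
move=> hN x y z xN yN zN.
rewrite (_ : ops_snd N 1 = p_snd N) // ops_snd_N ?(ltnW hN) //.
rewrite (ops_snd_t (_ : 2 <= 2) hN) ?(ops_snd_t (_ : 2 <= N.-1)) //; try lia.
split.
  move=> f; rewrite /ops_snd; case: ifP => _; first by rewrite /p_snd eqxx.
  by case: ifP => _; [rewrite /t_snd eqxx|rewrite /q_snd eqxx].
split; first by rewrite /p_snd eqxx orbT.
have [<-|nxz] := eqVneq x z.
  split; first by rewrite /p_snd /t_snd eqxx.
  split; last by rewrite /t_snd /q_snd eqxx.
  by move=> h h2 hN1; rewrite !ops_snd_t /t_snd ?eqxx //; lia.
have two : 2 <= 2 <= N.-1 by lia.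
have hlast : 2 <= N.-1 <= N.-1 by lia.
split.
  rewrite t_snd_xxz // walk_snd_1 // /p_snd (negbTE nxz) /=.
  by case: (x =P N) => [->|]; case: (z =P N).
split.
  move=> h h2 hN1; rewrite !ops_snd_t; try lia.
  by rewrite t_snd_xzz ?t_snd_xxz //; lia.
split.
  rewrite t_snd_xzz // walk_snd_last // /q_snd (negbTE nxz) (eq_sym z x) (negbTE nxz).
  by case: (x == N) => //=; case: (z =P N) => [->|].
by rewrite /q_snd; case: eqP => [->|]; rewrite ?eqxx.
Qed.

(* Absorption into [N] is a congruence of the second coordinate algebra:
   whether [f(c1,c2,c3)] equals [N] only depends on which [ci] equal [N]. *)
Definition absorb_form (N f : nat) (b1 b2 b3 : bool) :=
  if f <= 1 then b1 || ~~ b2 && b3 else if f < N then b1 || b3 else b3 || b1 && ~~ b2.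

Lemma ops_snd_absorb N f c1 c2 c3 : 3 <= N -> c1 <= N -> c2 <= N -> c3 <= N ->
  (ops_snd N f c1 c2 c3 == N) = absorb_form N f (c1 == N) (c2 == N) (c3 == N).
Proof.
move=> hN h1 h2 h3; rewrite /ops_snd /absorb_form.
case: ifP => _; first by rewrite /p_snd; case: ifP => ?; [|case: ifP => ?]; lia.
case: ifP => _; last by rewrite /q_snd; case: ifP => ?; [|case: ifP => ?; [|case: ifP => ?]]; lia.
rewrite /t_snd; case: ifP => ?; first lia.
case: ifP => ?; first lia.
have hc1 : c1 < N by lia.
have hc3 : c3 < N by lia.
have := walk_snd_top_between N f c1 c3.
have := walk_snd_between f.-1 hc1 hc3; have := walk_snd_between f hc1 hc3.
have := median_between13 (walk_snd N f.-1 c1 c3) c2 (walk_snd N f c1 c3).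
by case: ifP => ?; lia.
Qed.

Definition stair N (a c : nat) := (a <= N) && ((c == N) || ((c < N) && (c <= a <= c.+1))).

Lemma stair_le N a c : stair N a c -> (a <= N) && (c <= N).
Proof. rewrite /stair; lia. Qed.

Lemma walk_stair N j a1 c1 a3 c3 : 3 <= N -> 1 <= j <= N.-1 -> c1 < N -> c3 < N ->
  c1 <= a1 <= c1.+1 -> c3 <= a3 <= c3.+1 -> c1 != c3 -> a1 != a3 ->
  walk_snd N j c1 c3 <= walk_fst N j a1 a3 <= (walk_snd N j c1 c3).+1.
Proof.
move=> hN hj h1 h3 w1 w3 nc na.
have cw1 := clamp_window (ltnW (ltnW hN)) h1 w1.
have cw3 := clamp_window (ltnW (ltnW hN)) h3 w3.
rewrite /walk_snd /walk_fst (ltn_eqF h1) (ltn_eqF h3) /=.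
set u := clamp N a1 in cw1 *; set v := clamp N a3 in cw3 *.
have [lt13|ge13] := ltnP c1 c3.
  have -> : a1 <= a3 by lia.
  rewrite /skip1; case: eqP => [->|_]; last exact: median_window.
  have -> : median c1 c3 0 = c1 by rewrite /median; lia.
  by have -> : median u v 1 = u by rewrite /median /u /v /clamp in cw1 cw3 *; lia.
have -> : (a1 <= a3) = false by lia.
rewrite /skip1; case: eqP => [->|_].
  by rewrite subn0 (_ : N - 1 = N.-1); [exact: median_window | lia].
have -> : N - j = (N.-1 - j).+1 by lia.
case/andP: (median_window_succ (N.-1 - j) cw1 cw3) => lo ->; rewrite andbT.
by apply: leq_trans lo; apply: median_mono.
Qed.

Lemma walk_stair_top N h a1 c1 a3 c3 : 3 <= N -> 2 <= h <= N.-1 -> c1 < N -> c3 < N ->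
  c1 <= a1 <= c1.+1 -> c3 <= a3 <= c3.+1 -> c1 != c3 -> a1 != a3 ->
  (walk_snd_top N h c1 c3 <= walk_fst N h.-1 a1 a3 <= (walk_snd_top N h c1 c3).+1) /\
  (walk_snd_top N h c1 c3 <= walk_fst N h a1 a3 <= (walk_snd_top N h c1 c3).+1).
Proof.
move=> hN hj h1 h3 w1 w3 nc na.
have cw1 := clamp_window (ltnW (ltnW hN)) h1 w1.
have cw3 := clamp_window (ltnW (ltnW hN)) h3 w3.
rewrite /walk_snd_top /walk_fst.
have [lt13|ge13] := ltnP c1 c3.
  have -> : a1 <= a3 by lia.
  split; first exact: median_window.
  have -> : h = h.-1.+1 by lia.
  rewrite -pred_Sn.
  case/andP: (median_window_succ h.-1 cw1 cw3) => lo ->; rewrite andbT.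
  by apply: leq_trans lo; apply: median_mono.
have -> : (a1 <= a3) = false by lia.
split; last exact: median_window.
have -> : N - h.-1 = (N - h).+1 by lia.
case/andP: (median_window_succ (N - h) cw1 cw3) => lo ->; rewrite andbT.
by apply: leq_trans lo; apply: median_mono.
Qed.

Lemma t_stair_spread N h a1 c1 a2 c2 a3 c3 : 3 <= N -> 2 <= h <= N.-1 ->
  c1 < N -> c3 < N -> c1 != c3 ->
  c1 <= a1 <= c1.+1 -> stair N a2 c2 -> c3 <= a3 <= c3.+1 ->
  (t_snd N h c1 c2 c3 < N) &&
  (t_snd N h c1 c2 c3 <= t_fst N h a1 a2 a3 <= (t_snd N h c1 c2 c3).+1).
Proof.
move=> hN hh hc1 hc3 nc w1 o2 w3.
rewrite /t_snd (negbTE nc) (ltn_eqF hc1) (ltn_eqF hc3) /t_fst.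
have [e13|na] := eqVneq a1 a3.
  subst a3; have : minn c1 c3 <= (if c2 == N then walk_snd_top N h c1 c3
           else median (walk_snd N h.-1 c1 c3) c2 (walk_snd N h c1 c3)) <= maxn c1 c3.
    case: eqP => _; first exact: walk_snd_top_between.
    have := walk_snd_between h.-1 hc1 hc3; have := walk_snd_between h hc1 hc3.
    have := median_between13 (walk_snd N h.-1 c1 c3) c2 (walk_snd N h c1 c3); lia.
  by rewrite /=; case: (c2 == N); lia.
have := median_between13 (walk_fst N h.-1 a1 a3) a2 (walk_fst N h a1 a3).
have [_|nc2] := eqVneq c2 N.
  have [lo hi] := walk_stair_top hN hh hc1 hc3 w1 w3 nc na.
  by have := walk_snd_top_between N h c1 c3; rewrite /=; lia.
have w2 : c2 <= a2 <= c2.+1 by move: o2; rewrite /stair (negbTE nc2); lia.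
have hh1 : 1 <= h.-1 <= N.-1 by lia.
have hh2 : 1 <= h <= N.-1 by lia.
have /andP[lo1 hi1] := walk_stair hN hh1 hc1 hc3 w1 w3 nc na.
have /andP[lo2 hi2] := walk_stair hN hh2 hc1 hc3 w1 w3 nc na.
have lo : median (walk_snd N h.-1 c1 c3) c2 (walk_snd N h c1 c3) <=
          median (walk_fst N h.-1 a1 a3) a2 (walk_fst N h a1 a3).
  by apply: median_mono => //; lia.
have hi : median (walk_fst N h.-1 a1 a3) a2 (walk_fst N h a1 a3) <=
          (median (walk_snd N h.-1 c1 c3) c2 (walk_snd N h c1 c3)).+1.
  by rewrite -median_succ; apply: median_mono => //; lia.
have := walk_snd_between h.-1 hc1 hc3; have := walk_snd_between h hc1 hc3.
have := median_between13 (walk_snd N h.-1 c1 c3) c2 (walk_snd N h c1 c3).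
by rewrite /=; lia.
Qed.

Lemma t_stair N h a1 c1 a2 c2 a3 c3 : 3 <= N -> 2 <= h <= N.-1 ->
  stair N a1 c1 -> stair N a2 c2 -> stair N a3 c3 ->
  stair N (t_fst N h a1 a2 a3) (t_snd N h c1 c2 c3).
Proof.
move=> hN hh o1 o2 o3.
have /andP[a1N c1N] := stair_le o1; have /andP[a2N _] := stair_le o2.
have /andP[a3N c3N] := stair_le o3.
have t_le : t_fst N h a1 a2 a3 <= N.
  rewrite /t_fst; case: eqP => // _.
  have := median_between12 (walk_fst N h.-1 a1 a3) a2 (walk_fst N h a1 a3).
  by have := walk_fst_le h.-1 a1 a3 (ltnW (ltnW hN)); lia.
rewrite /stair t_le /=.
have [e13|nc] := eqVneq c1 c3.
  subst c3; rewrite /t_snd eqxx.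
  have [//|c1N'] := eqVneq c1 N.
  have hc1 : c1 < N by lia.
  have w1 : c1 <= a1 <= c1.+1 by move: o1; rewrite /stair (negbTE c1N'); lia.
  have w3 : c1 <= a3 <= c1.+1 by move: o3; rewrite /stair (negbTE c1N'); lia.
  have := walk_fst_window h.-1 (ltnW (ltnW hN)) hc1 w1 w3.
  have := walk_fst_window h (ltnW (ltnW hN)) hc1 w1 w3.
  have := median_between13 (walk_fst N h.-1 a1 a3) a2 (walk_fst N h a1 a3).
  by rewrite /t_fst; case: eqP; lia.
have [absorbed|/norP[n1 n3]] := boolP ((c1 == N) || (c3 == N)).
  by rewrite /t_snd (negbTE nc) absorbed eqxx.
have hc1 : c1 < N by lia.
have hc3 : c3 < N by lia.
have w1 : c1 <= a1 <= c1.+1 by move: o1; rewrite /stair (negbTE n1); lia.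
have w3 : c3 <= a3 <= c3.+1 by move: o3; rewrite /stair (negbTE n3); lia.
by rewrite (t_stair_spread hN hh hc1 hc3 nc w1 o2 w3) orbT.
Qed.

Lemma p_stair N a1 c1 a2 c2 a3 c3 : 3 <= N ->
  stair N a1 c1 -> stair N a2 c2 -> stair N a3 c3 ->
  stair N (p_fst N a1 a2 a3) (p_snd N c1 c2 c3).
Proof.
move=> hN o1 o2 o3; have /andP[a1N c1N] := stair_le o1.
have p_le : p_fst N a1 a2 a3 <= N by rewrite /p_fst /clamp; case: ifP; lia.
rewrite /stair p_le /=.
have [->|->] : p_snd N c1 c2 c3 = N \/ p_snd N c1 c2 c3 = c1.
- by rewrite /p_snd; case: ifP => _; [right|case: ifP => _; [left|right]].
- by rewrite eqxx.
move: o1; rewrite /stair => /andP[_ /orP[-> //|/andP[hc w]]].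
apply/orP; right; rewrite hc /p_fst; case: ifP => // _ /=.
by apply: clamp_window => //; lia.
Qed.

Lemma q_stair N a1 c1 a2 c2 a3 c3 : 3 <= N ->
  stair N a1 c1 -> stair N a2 c2 -> stair N a3 c3 ->
  stair N (q_fst N a1 a2 a3) (q_snd N c1 c2 c3).
Proof.
move=> hN o1 o2 o3; have /andP[a1N c1N] := stair_le o1; have /andP[a3N c3N] := stair_le o3.
have q_le : q_fst N a1 a2 a3 <= N by rewrite /q_fst /clamp; case: ifP; [|case: ifP]; lia.
rewrite /stair q_le /=.
have [->|->] : q_snd N c1 c2 c3 = N \/ q_snd N c1 c2 c3 = c3.
- rewrite /q_snd; case: eqP => [->|_]; [by right|]; case: ifP => _; [by right|].
  by case: ifP => _; [left|right].
- by rewrite eqxx.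
move: o3; rewrite /stair => /andP[_ /orP[-> //|/andP[hc w]]].
apply/orP; right; rewrite hc /q_fst; case: eqP => [-> //|_]; case: ifP => // _ /=.
by apply: clamp_window => //; lia.
Qed.

Lemma ops_stair N f a1 c1 a2 c2 a3 c3 : 3 <= N ->
  stair N a1 c1 -> stair N a2 c2 -> stair N a3 c3 ->
  stair N (ops_fst N f a1 a2 a3) (ops_snd N f c1 c2 c3).
Proof.
move=> hN o1 o2 o3; rewrite /ops_fst /ops_snd.
case: ifP => hf; first exact: p_stair.
case: ifP => hf2; last exact: q_stair.
by apply: t_stair => //; lia.
Qed.

Definition Sig3 : signature := Signature (fun _ : nat => 3).

Definition tern_alg (T : Type) (F : nat -> T -> T -> T -> T) : algebra Sig3 :=
  @Algebra Sig3 T (fun f args => F f (args x3) (args y3) (args z3)).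

Definition basic3 (f : nat) (a b c : 'I_3) : term Sig3 'I_3 :=
  @App Sig3 'I_3 f (fun i => Var (nth a [:: a; b; c] i)).

Lemma top3_basic3 (B : algebra Sig3) f (a b c : 'I_3) (x y z : B) :
  top3 (basic3 f a b c) x y z =
  top3 (basic3 f x3 y3 z3) (pick3 x y z a) (pick3 x y z b) (pick3 x y z c).
Proof.
rewrite /top3 /=; congr (interp _); apply: functional_extensionality.
by case=> [[|[|[|i]]] Hi].
Qed.

Section BasicIdentities.
Variables (T : Type) (F : nat -> T -> T -> T -> T) (B : algebra Sig3).
Hypothesis B_in : in_variety (generated_variety (tern_alg F)) B.

Lemma basic_identity f g (a b c a' b' c' : 'I_3) :
  (forall u v w : T, let val := pick3 u v w in
     F f (val a) (val b) (val c) = F g (val a') (val b') (val c')) ->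
  forall x y z : B, let val := pick3 x y z in
    top3 (basic3 f x3 y3 z3) (val a) (val b) (val c) =
    top3 (basic3 g x3 y3 z3) (val a') (val b') (val c').
Proof.
move=> hF x y z val; rewrite /val -(top3_basic3 f a b c) -(top3_basic3 g a' b' c').
apply: (generated_identity3 _ B_in) => u v w.
by rewrite (top3_basic3 f a b c) (top3_basic3 g a' b' c'); exact: hF.
Qed.

Lemma basic_projection f (a b c d : 'I_3) :
  (forall u v w : T, let val := pick3 u v w in F f (val a) (val b) (val c) = val d) ->
  forall x y z : B, let val := pick3 x y z in
    top3 (basic3 f x3 y3 z3) (val a) (val b) (val c) = val d.
Proof.
move=> hF x y z val; rewrite /val -(top3_basic3 f a b c).
have -> : pick3 x y z d = top3 (Var d) x y z by [].
apply: (generated_identity3 _ B_in) => u v w.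
by rewrite (top3_basic3 f a b c); exact: hF.
Qed.

End BasicIdentities.
Arguments basic_identity [T F B] B_in f g a b c a' b' c'.
Arguments basic_projection [T F B] B_in f a b c d.

Section StairAlgebra.
Variable N : nat.
Hypothesis N_ge3 : 3 <= N.

Definition stair_pair := {p : 'I_N.+1 * 'I_N.+1 | stair N p.1 p.2}.
Definition fst_of (s : stair_pair) : nat := (val s).1.
Definition snd_of (s : stair_pair) : nat := (val s).2.

Lemma stair_inord a c : stair N a c -> stair N (@inord N a) (@inord N c).
Proof. by move=> h; have /andP[ha hc] := stair_le h; rewrite !inordK. Qed.

Definition mk_stair a c (h : stair N a c) : stair_pair :=
  exist _ (inord a, inord c) (stair_inord h).

Lemma fst_mk a c (h : stair N a c) : fst_of (mk_stair h) = a.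
Proof. by rewrite /fst_of /= inordK // ltnS; case/andP: (stair_le h). Qed.

Lemma snd_mk a c (h : stair N a c) : snd_of (mk_stair h) = c.
Proof. by rewrite /snd_of /= inordK // ltnS; case/andP: (stair_le h). Qed.

Lemma stair_of (s : stair_pair) : stair N (fst_of s) (snd_of s).
Proof. exact: valP s. Qed.

Lemma fst_le (s : stair_pair) : fst_of s <= N.
Proof. by rewrite /fst_of -ltnS. Qed.

Lemma snd_le (s : stair_pair) : snd_of s <= N.
Proof. by rewrite /snd_of -ltnS. Qed.

Lemma stair_eq (s s' : stair_pair) : fst_of s = fst_of s' -> snd_of s = snd_of s' -> s = s'.
Proof.
case: s s' => [[a c] ?] [[a' c'] ?] /= h1 h2; apply: val_inj => /=.
by congr pair; apply: val_inj.
Qed.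

Definition stair_op (f : nat) (s1 s2 s3 : stair_pair) : stair_pair :=
  mk_stair (ops_stair f N_ge3 (stair_of s1) (stair_of s2) (stair_of s3)).

Lemma fst_op f s1 s2 s3 :
  fst_of (stair_op f s1 s2 s3) = ops_fst N f (fst_of s1) (fst_of s2) (fst_of s3).
Proof. exact: fst_mk. Qed.

Lemma snd_op f s1 s2 s3 :
  snd_of (stair_op f s1 s2 s3) = ops_snd N f (snd_of s1) (snd_of s2) (snd_of s3).
Proof. exact: snd_mk. Qed.

Definition Stair : algebra Sig3 := tern_alg stair_op.

Lemma fst_hom : is_hom (A := Stair) (B := tern_alg (ops_fst N)) fst_of.
Proof. by move=> f args; exact: fst_op. Qed.

Lemma snd_hom : is_hom (A := Stair) (B := tern_alg (ops_snd N)) snd_of.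
Proof. by move=> f args; exact: snd_op. Qed.

Lemma absorbed_hom :
  is_hom (A := Stair) (B := tern_alg (absorb_form N)) (fun s => snd_of s == N).
Proof. by move=> f args; rewrite /= snd_op ops_snd_absorb ?snd_le. Qed.

Lemma stair_ids : dgumm_ops (fun _ => True) stair_op N.
Proof.
move=> a b c _ _ _.
have [F1 [F2 [F3 [F4 [F5 F6]]]]] := ops_fst_ids N_ge3 (fst_le a) (fst_le b) (fst_le c).
have [G1 [G2 [G3 [G4 [G5 G6]]]]] := ops_snd_ids N_ge3 (snd_le a) (snd_le b) (snd_le c).
split; first by move=> f; apply: stair_eq; rewrite ?fst_op ?snd_op.
split; first by apply: stair_eq; rewrite ?fst_op ?snd_op.
split; first by apply: stair_eq; rewrite ?fst_op ?snd_op.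
split; first by move=> h h2 hN; apply: stair_eq; rewrite ?fst_op ?snd_op ?F4 ?G4.
by split; apply: stair_eq; rewrite ?fst_op ?snd_op.
Qed.

End StairAlgebra.

Section Counterexample.
Variable N : nat.
Hypothesis N_ge3 : 3 <= N.

Lemma stair_alvin : n_directed_alvin_heads (generated_variety (Stair N_ge3)) N.+1.
Proof.
exists (basic3 1 x3 y3 z3), (basic3 N x3 y3 z3), (fun h => basic3 h x3 y3 z3).
have ids (a b c : Stair N_ge3) := stair_ids N_ge3 (x := a) (y := b) (z := c) I I I.
split=> B HB; last first.
  move=> x y; split.
  - exact (basic_projection HB 1 x3 y3 x3 x3 (fun u v w => (ids u v w).1 1) x y x).
  - exact (basic_projection HB N x3 y3 x3 x3 (fun u v w => (ids u v w).1 N) x y x).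
move=> x y z; rewrite (_ : N.+1 - 2 = N.-1); last lia.
split.
  move=> h _.
  exact (basic_projection HB h x3 y3 x3 x3 (fun u v w => (ids u v w).1 h) x y z).
split; first exact (basic_projection HB 1 x3 z3 z3 x3 (fun u v w => (ids u v w).2.1) x y z).
split.
  exact (basic_identity HB 1 2 x3 x3 z3 x3 x3 z3 (fun u v w => (ids u v w).2.2.1) x y z).
split.
  move=> h /andP[h2 hN].
  exact (basic_identity HB h h.+1 x3 z3 z3 x3 x3 z3
    (fun u v w => (ids u v w).2.2.2.1 h h2 hN) x y z).
split.
  exact (basic_identity HB N.-1 N x3 z3 z3 x3 z3 z3 (fun u v w => (ids u v w).2.2.2.2.1) x y z).
exact (basic_projection HB N x3 x3 z3 z3 (fun u v w => (ids u v w).2.2.2.2.2) x y z).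
Qed.

(* For [x = (0,0)], [y = (0,N)], [z = (N,N)], [w = (N,N-1)] put
   [e_k = u_k(x,y,z,w)].  The first coordinate of [e_k] is that of
   [u_k(x,x,w,w)] and its second that of [u_k(x,y,y,w)], while [e_k] is
   never absorbed ([u_k(x,y,y,x) = x]), so [e_k] lies on the staircase.
   Hence the first coordinate grows by at most one every two steps, so it
   stays below [N] along the chain, yet [e_(2N-1) = w]. *)
Lemma stair_not_modular : ~ m_modular (generated_variety (Stair N_ge3)) (2 * N - 1).
Proof.
case=> u U; set m := 2 * N - 1.
have sx : stair N 0 0 by rewrite /stair; lia.
have sy : stair N 0 N by rewrite /stair eqxx; lia.
have sz : stair N N N by rewrite /stair eqxx; lia.
have sw : stair N N N.-1 by rewrite /stair; lia.
pose x : Stair N_ge3 := mk_stair sx; pose y : Stair N_ge3 := mk_stair sy.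
pose z : Stair N_ge3 := mk_stair sz; pose w : Stair N_ge3 := mk_stair sw.
pose e k := top4 (u k) x y z w.
have D := U _ (generated_variety_in (A := Stair N_ge3)).
have fst_e k : fst_of (e k) = fst_of (top4 (u k) x x w w).
  by rewrite /e !(top4_hom (@fst_hom _ N_ge3)) !fst_mk.
have snd_e k : snd_of (e k) = snd_of (top4 (u k) x y y w).
  by rewrite /e !(top4_hom (@snd_hom _ N_ge3)) !snd_mk.
have absorbed_e k : (snd_of (e k) == N) = (snd_of (top4 (u k) x y y x) == N).
  have w_x : (snd_of w == N) = (snd_of x == N) by rewrite !snd_mk; lia.
  by rewrite /e !(top4_hom (@absorbed_hom _ N_ge3)) /= w_x.
have on_stair k : k <= m -> snd_of (e k) <= fst_of (e k) <= (snd_of (e k)).+1.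
  move=> hk; have := stair_of (e k).
  by rewrite /stair absorbed_e (D x y y x).1 // snd_mk; lia.
have slow k : k <= m -> fst_of (e k) <= k %/ 2.
  elim: k => [_|k IH hk]; first by rewrite /e (D x y z w).2.1 fst_mk.
  have := IH (ltnW hk); have [ev|od] := boolP (~~ odd k).
    by rewrite !fst_e (D x x w w).2.2.2.1 //; lia.
  have := on_stair _ hk; have := on_stair _ (ltnW hk).
  by rewrite !snd_e (D x y y w).2.2.2.2 //; lia.
by have := slow m (leqnn m); rewrite /e (D x y z w).2.2.1 fst_mk /m; lia.
Qed.

End Counterexample.

Theorem theorem6p8 (n : nat) (hn : 4 <= n) :
  (forall (S : signature) (V : variety S),
      has_two_headed_directed_Gumm V n ->
      m_reversed_modular V (2 * n - 3) /\ m_modular V (2 * n - 2)) /\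
  (forall (S : signature) (V : variety S),
      n_directed_alvin_heads V n ->
      m_reversed_modular V (2 * n - 3) /\ m_modular V (2 * n - 2)) /\
  (exists (S : signature) (V : variety S),
      locally_finite V /\ n_directed_alvin_heads V n /\
      has_two_headed_directed_Gumm V n /\ ~ m_modular V (2 * n - 3)).
Proof.
split; first by move=> S V; exact: gumm_modular.
split; first by move=> S V /alvin_heads_gumm; exact: gumm_modular.
have N_ge3 : 3 <= n.-1 by lia.
have alvin : n_directed_alvin_heads (generated_variety (Stair N_ge3)) n.
  by have := stair_alvin N_ge3; rewrite prednK //; lia.
exists Sig3, (generated_variety (Stair N_ge3)).
split; first exact: generated_locally_finite.
split; first exact: alvin.
split; first exact: alvin_heads_gumm.
rewrite (_ : 2 * n - 3 = 2 * n.-1 - 1); last lia.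
exact: stair_not_modular.
Qed.
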